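(* Let $G$ be a graph of goods, $n\ge1$, $t\ge 1$ integers, and $c>0$ a real number. Suppose that for every regular collection of $n$ agents (respectively, for every regular collection of $n$ agents of at most $t$ types) with utility functions on $G$ there exists a $c$-sufficient allocation. Then for every collection of $n$ agents with arbitrary utility functions on $G$ (respectively, every collection of $n$ agents of at most $t$ types) there exists a $c$-sufficient allocation.
   Context: A graph of goods is a finite connected graph $G=(V,E)$ whose vertices are goods. A utility function on $G$ assigns a non-negative real number to each good and is extended additively to sets. A $G$-bundle is a subset of $V$ inducing a connected subgraph of $G$ (the empty set allowed). An $n$-split of $G$ is a sequence of $n$ pairwise disjoint $G$-bundles (possibly empty) whose union is $V$. $\mathrm{mms}^{(n)}(G,u)=\max_{P_1,\dots,P_n}\min_i u(P_i)$ over all $n$-splits. An allocation to agents $1,\dots,n$ with utilities $u_1,\dots,u_n$ is an $n$-split $P_1,\dots,P_n$ with $P_i$ given to agent $i$. For $c>0$, the allocation is $c$-sufficient if $u_i(P_i)\ge c\cdot\mathrm{mms}^{(n)}(G,u_i)$ for all $i$. Agents are of the same type if they have the same utility function. An agent with utility $u$ is $n$-proportional if $\mathrm{mms}^{(n)}(G,u)=u(V)/n$, and $n$-regular if moreover $\mathrm{mms}^{(n)}(G,u)=1$. A collection of $n$ agents is regular if every agent in it is $n$-regular. *)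

From HB Require Import structures.
From mathcomp Require Import all_boot all_order all_algebra.
Set Implicit Arguments. Unset Strict Implicit. Unset Printing Implicit Defensive.
Import Order.TTheory GRing.Theory Num.Theory.
Local Open Scope ring_scope.

Definition graph_of_goods (T : finType) (e : rel T) : Prop :=
  symmetric e /\ irreflexive e /\ (forall x y : T, connect e x y).

Definition induced (T : finType) (e : rel T) (S : {set T}) : rel T :=
  [rel x y | [&& x \in S, y \in S & e x y]].

(* G-bundle: S induces a connected subgraph (empty set allowed). *)
Definition bundle (T : finType) (e : rel T) (S : {set T}) : bool :=
  [forall x in S, forall y in S, connect (induced e S) x y].

Definition is_split (T : finType) (e : rel T) (n : nat)
    (P : {ffun 'I_n -> {set T}}) : bool :=
  [&& [forall i, bundle e (P i)],
      [forall i, forall j, (i != j) ==> [disjoint P i & P j]] &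
      (\bigcup_(i < n) P i == [set: T])].

Definition util (R : realFieldType) (T : finType) (u : T -> R) (S : {set T}) : R :=
  \sum_(x in S) u x.

Definition utility (R : realFieldType) (T : finType) (u : T -> R) : Prop :=
  forall x, 0 <= u x.

(* min_i u(P_i); for n >= 1 the default u(V) is harmless since u(P_i) <= u(V)
   for nonnegative u. *)
Definition min_share (R : realFieldType) (T : finType) (n : nat) (u : T -> R)
    (P : {ffun 'I_n -> {set T}}) : R :=
  \big[Num.min/util u [set: T]]_(i < n) util u (P i).

(* mms^{(n)}(G,u) = max over n-splits of min_i u(P_i); the default 0 is harmless
   for nonnegative u since n-splits exist. *)
Definition mms (R : realFieldType) (T : finType) (e : rel T) (n : nat) (u : T -> R) : R :=
  \big[Num.max/0]_(P : {ffun 'I_n -> {set T}} | is_split e P) min_share u P.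

Definition c_sufficient (R : realFieldType) (T : finType) (e : rel T) (n : nat)
    (c : R) (U : 'I_n -> T -> R) (P : {ffun 'I_n -> {set T}}) : Prop :=
  is_split e P /\ forall i, c * mms e n (U i) <= util (U i) (P i).

Definition n_proportional (R : realFieldType) (T : finType) (e : rel T) (n : nat)
    (u : T -> R) : Prop :=
  mms e n u = util u [set: T] / n%:R.

Definition n_regular (R : realFieldType) (T : finType) (e : rel T) (n : nat)
    (u : T -> R) : Prop :=
  n_proportional e n u /\ mms e n u = 1.

Definition regular_collection (R : realFieldType) (T : finType) (e : rel T) (n : nat)
    (U : 'I_n -> T -> R) : Prop :=
  forall i, n_regular e n (U i).

Definition at_most_types (R : realFieldType) (T : finType) (n t : nat)
    (U : 'I_n -> T -> R) : Prop :=
  exists (w : 'I_t -> T -> R) (f : 'I_n -> 'I_t), forall i x, U i x = w (f i) x.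

From HB Require Import structures.
From mathcomp Require Import all_boot all_order all_algebra.
From Stdlib Require Import FunctionalExtensionality.
Set Implicit Arguments. Unset Strict Implicit. Unset Printing Implicit Defensive.
Import Order.TTheory GRing.Theory Num.Theory.
Local Open Scope ring_scope.

(* Fix an agent with utility u and mms(u) > 0, and an n-split Q attaining
   mms(u).  Rescaling u separately on every part, v(x) = u(x) / u(Q_i) for
   x in Q_i, gives v(Q_i) = 1 for every i, hence v(V) = n; since the minimum
   share of any n-split is at most the average share, mms(v) = 1 and v is
   n-regular.  Moreover u(Q_i) >= mms(u) yields v(S) <= u(S) / mms(u), so a
   bundle worth c * mms(v) = c to v is worth at least c * mms(u) to u.
   Agents with mms(u) = 0 are satisfied by any bundle; they are replaced by
   the rescaling of some agent with positive mms, and if there is none any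
   n-split works.  The replacement u |-> regularize u0 u acts on utility
   functions, so agents of equal type keep equal types. *)

Section Splits.
Variables (R : realFieldType) (T : finType) (e : rel T) (n : nat).
Implicit Types (u : T -> R) (P : {ffun 'I_n -> {set T}}).

Lemma util_ge0 u S : utility u -> 0 <= util u S.
Proof. by move=> u_ge0; apply: sumr_ge0 => x _. Qed.

Lemma min_share_le u P i : min_share u P <= util u (P i).
Proof. by rewrite /min_share (bigD1 i) //= ge_min lexx. Qed.

Lemma min_share_ge u P a :
  (forall i, a <= util u (P i)) -> a <= util u [set: T] -> a <= min_share u P.
Proof.
move=> a_le aT; rewrite /min_share; elim/big_ind: _ => // x y ax ay.
by rewrite le_min ax ay.
Qed.

Lemma le_mms u P : is_split e P -> min_share u P <= mms e n u.
Proof. by move=> splitP; rewrite /mms (bigD1 P) //= le_max lexx. Qed.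

Lemma mms_attained u :
  0 < mms e n u -> exists P, is_split e P /\ min_share u P = mms e n u.
Proof.
pose attained m := m = 0 \/ exists P, is_split e P /\ min_share u P = m.
have : attained (mms e n u).
  apply: big_ind => [|x y|P splitP]; [by left | | by right; exists P].
  by rewrite maxEle; case: ifP.
by case=> [->|//]; rewrite ltxx.
Qed.

Lemma util_split u P : is_split e P -> util u [set: T] = \sum_i util u (P i).
Proof.
case/and3P=> _ /forallP disjP /eqP coverP.
rewrite /util -coverP partition_disjoint_bigcup // => i j neq_ij.
by move: (disjP i) => /forallP /(_ j) /implyP; apply.
Qed.

Lemma split_part_unique P i j x :
  is_split e P -> x \in P i -> x \in P j -> i = j.
Proof.
case/and3P=> _ /forallP disjP _ xi xj; apply/eqP; apply: contraT => neq_ij.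
move: (disjP i) => /forallP /(_ j) /implyP /(_ neq_ij) /disjointFr /(_ xi).
by rewrite xj.
Qed.

Lemma mms_le_proportional u : utility u -> mms e n u *+ n <= util u [set: T].
Proof.
move=> u_ge0; rewrite /mms.
apply: (big_ind (fun m => m *+ n <= util u [set: T])) => [|x y xle yle|P splitP].
- by rewrite mul0rn util_ge0.
- by rewrite maxEle; case: ifP.
- have -> : min_share u P *+ n = \sum_(i < n) min_share u P.
    by rewrite sumr_const card_ord.
  by rewrite (util_split u splitP); apply: ler_sum => i _; apply: min_share_le.
Qed.

(* On a connected graph n-splits exist for n >= 1: give V to one agent. *)
Lemma trivial_split : graph_of_goods e -> (0 < n)%N ->
  exists P : {ffun 'I_n -> {set T}}, is_split e P.
Proof.
move=> [_ [_ connected]] n_gt0.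
exists [ffun i : 'I_n => if val i == 0%N then [set: T] else set0].
apply/and3P; split.
- apply/forallP => i; rewrite ffunE; case: ifP => _; apply/forallP => x;
    apply/implyP => xP; apply/forallP => y; apply/implyP => yP;
    last by rewrite inE in xP.
  by rewrite (@eq_connect _ _ e) // => a b; rewrite /induced /= !inE.
- apply/forallP => i; apply/forallP => j; apply/implyP => neq_ij; rewrite !ffunE.
  case: ifP => i0; case: ifP => j0;
    rewrite ?disjoints_subset ?setC0 ?sub0set ?subsetT //.
  by move: neq_ij; rewrite -val_eqE /= (eqP i0) (eqP j0).
- apply/eqP/setP => x; rewrite inE; apply/bigcupP; exists (Ordinal n_gt0) => //.
  by rewrite ffunE eqxx inE.
Qed.

Definition rescale u P (x : T) : R :=
  if [pick i | x \in P i] is Some i then u x / util u (P i) else 0.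

Section Rescale.
Variables (u : T -> R) (P : {ffun 'I_n -> {set T}}) (m : R).
Hypotheses (u_ge0 : utility u) (splitP : is_split e P) (m_gt0 : 0 < m).
Hypothesis m_le_part : forall i, m <= util u (P i).

Let part_gt0 i : 0 < util u (P i).
Proof. exact: lt_le_trans m_gt0 (m_le_part i). Qed.

Let pick_part i x : x \in P i -> [pick j | x \in P j] = Some i.
Proof.
move=> xi; case: pickP => [j xj|/(_ i)]; last by rewrite xi.
by rewrite (split_part_unique splitP xj xi).
Qed.

Lemma rescale_ge0 : utility (rescale u P).
Proof.
move=> x; rewrite /rescale; case: pickP => // i _.
by rewrite divr_ge0 ?u_ge0 ?util_ge0.
Qed.

Lemma util_rescale_part i : util (rescale u P) (P i) = 1.
Proof.
rewrite /util (eq_bigr (fun x => u x / util u (P i))); last first.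
  by move=> x xi; rewrite /rescale (pick_part xi).
by rewrite -mulr_suml -/(util u (P i)) divff // gt_eqF ?part_gt0.
Qed.

Lemma util_rescale_total : util (rescale u P) [set: T] = n%:R.
Proof.
rewrite (util_split _ splitP) (eq_bigr (fun _ => 1)) ?sumr_const ?card_ord //.
by move=> i _; apply: util_rescale_part.
Qed.

(* Since m lower-bounds every part, rescaling shrinks values by at least m. *)
Lemma util_rescale_le S : util (rescale u P) S <= util u S / m.
Proof.
rewrite /util mulr_suml; apply: ler_sum => x _; rewrite /rescale.
case: pickP => [i _|_]; last by rewrite divr_ge0 ?u_ge0 ?ltW.
by rewrite ler_wpM2l ?u_ge0 // lef_pV2 ?posrE ?part_gt0.
Qed.

Lemma rescale_regular : (0 < n)%N -> n_regular e n (rescale u P).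
Proof.
move=> n_gt0.
have mms1 : mms e n (rescale u P) = 1.
  apply/eqP; rewrite eq_le; apply/andP; split.
    have := mms_le_proportional rescale_ge0.
    by rewrite util_rescale_total -[n%:R]mulr1n lerMn2r eqn0Ngt n_gt0.
  apply: le_trans (le_mms _ splitP); apply: min_share_ge => [i|].
    by rewrite util_rescale_part.
  by rewrite util_rescale_total ler1n.
split => //; rewrite /n_proportional mms1 util_rescale_total divff //.
by rewrite pnatr_eq0 -lt0n.
Qed.

End Rescale.

Definition optimal_split u : option {ffun 'I_n -> {set T}} :=
  [pick P | is_split e P && (min_share u P == mms e n u)].

Definition normalize u : T -> R :=
  if optimal_split u is Some P then rescale u P else u.

Lemma normalize_spec u : (0 < n)%N -> utility u -> 0 < mms e n u ->
  [/\ utility (normalize u), n_regular e n (normalize u)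
    & forall S, util (normalize u) S <= util u S / mms e n u].
Proof.
move=> n_gt0 u_ge0 mms_gt0; rewrite /normalize /optimal_split.
case: pickP => [Q /andP [splitQ /eqP optQ]|none]; last first.
  have [P [splitP optP]] := mms_attained mms_gt0.
  by move: (none P); rewrite splitP optP eqxx.
have m_le_part i : mms e n u <= util u (Q i) by rewrite -optQ min_share_le.
split; first exact: rescale_ge0.
  exact: rescale_regular u_ge0 splitQ mms_gt0 m_le_part n_gt0.
exact: util_rescale_le u_ge0 mms_gt0 m_le_part.
Qed.

End Splits.

Section Reduction.
Variables (R : realFieldType) (T : finType) (e : rel T) (n : nat) (c : R).
Hypotheses (goods : graph_of_goods e) (n_gt0 : (0 < n)%N) (c_gt0 : 0 < c).

Lemma null_mms_content (u : T -> R) S :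
  utility u -> mms e n u <= 0 -> c * mms e n u <= util u S.
Proof.
by move=> u_ge0 mms_le0; rewrite (le_trans _ (util_ge0 S u_ge0)) ?pmulr_rle0.
Qed.

Definition regularize (u0 u : T -> R) : T -> R :=
  if 0 < mms e n u then normalize e n u else normalize e n u0.

Section Reference.
Variables (u0 : T -> R) (U : 'I_n -> T -> R).
Hypotheses (u0_ge0 : utility u0) (mms_u0_gt0 : 0 < mms e n u0).
Hypothesis U_ge0 : forall i, utility (U i).

Let regU i := regularize u0 (U i).

Lemma regularize_regular :
  (forall i, utility (regU i)) /\ regular_collection e regU.
Proof.
have [ref_ge0 ref_regular _] := normalize_spec n_gt0 u0_ge0 mms_u0_gt0.
suff spec i : utility (regU i) /\ n_regular e n (regU i).
  by split=> i; case: (spec i).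
rewrite /regU /regularize; case: ifP => // mms_gt0.
by have [? ? _] := normalize_spec n_gt0 (U_ge0 i) mms_gt0.
Qed.

Lemma regularize_sufficient P :
  c_sufficient e c regU P -> c_sufficient e c U P.
Proof.
move=> [splitP suffP]; split=> // i.
have [mms_gt0|] := ltP 0 (mms e n (U i)); last exact: null_mms_content.
have [_ [_ mms1] le_div] := normalize_spec n_gt0 (U_ge0 i) mms_gt0.
move: (suffP i); rewrite /regU /regularize mms_gt0 mms1 mulr1 => c_le.
by rewrite -ler_pdivlMr //; apply: le_trans c_le (le_div _).
Qed.

Lemma regularize_types t : at_most_types t U -> at_most_types t regU.
Proof.
move=> [w [f Uw]]; exists (fun k => regularize u0 (w k)), f => i x.
by rewrite /regU (functional_extensionality _ _ (Uw i)).
Qed.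

End Reference.

Lemma reduction (U : 'I_n -> T -> R) : (forall i, utility (U i)) ->
  (forall u0, utility u0 -> 0 < mms e n u0 ->
     exists P, c_sufficient e c (fun i => regularize u0 (U i)) P) ->
  exists P, c_sufficient e c U P.
Proof.
move=> U_ge0 regular_case.
case: (pickP (fun i => 0 < mms e n (U i))) => [i0 mms_gt0|all_null].
  have [P suffP] := regular_case _ (U_ge0 i0) mms_gt0.
  by exists P; apply: regularize_sufficient suffP.
have [P splitP] := trivial_split goods n_gt0; exists P; split=> // i.
by apply: null_mms_content => //; rewrite leNgt all_null.
Qed.

End Reduction.

Theorem proposition2p3 (R : realFieldType) (T : finType) (e : rel T)
    (n t : nat) (c : R) :
  graph_of_goods e -> (1 <= n)%N -> (1 <= t)%N -> 0 < c ->
  ((forall U : 'I_n -> T -> R, (forall i, utility (U i)) ->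
      regular_collection e U -> exists P, c_sufficient e c U P) ->
   forall U : 'I_n -> T -> R, (forall i, utility (U i)) ->
      exists P, c_sufficient e c U P)
  /\
  ((forall U : 'I_n -> T -> R, (forall i, utility (U i)) ->
      regular_collection e U -> at_most_types t U ->
      exists P, c_sufficient e c U P) ->
   forall U : 'I_n -> T -> R, (forall i, utility (U i)) ->
      at_most_types t U -> exists P, c_sufficient e c U P).
Proof.
move=> goods n_gt0 _ c_gt0.
split=> [regular_case U U_ge0 | regular_case U U_ge0 typesU];
  apply: (reduction goods n_gt0 c_gt0 U_ge0) => u0 u0_ge0 mms_u0_gt0;
  have [regU_ge0 regU_regular] := regularize_regular n_gt0 u0_ge0 mms_u0_gt0 U_ge0.
- exact: regular_case.
- by apply: regular_case => //; apply: regularize_types.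
Qed.
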